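(* Let $A\in\mathbb{R}^{d\times d}$ be invertible, $\bm{b}\in\mathbb{R}^d$, $\bm{x}^\ast=A^{-1}\bm{b}$, $\bm{x}_0\in\mathbb{R}^d$, $\Sigma_0$ symmetric positive-definite. Let $\bm{x}_m$ be the BayesCG mean, defined by the recursion: $\bm{r}_0=\bm{b}-A\bm{x}_0$, $\tilde{\bm{s}}_1=\bm{r}_0$, $\bm{s}_k=\tilde{\bm{s}}_k/\|\tilde{\bm{s}}_k\|_{A\Sigma_0A^\top}$, $\bm{x}_k=\bm{x}_0+\Sigma_0A^\top S_k\Lambda_k^{-1}S_k^\top\bm{r}_0$ with $S_k=[\bm{s}_1,\dots,\bm{s}_k]$ and $\Lambda_k=S_k^\top A\Sigma_0A^\top S_k$, $\bm{r}_k=\bm{b}-A\bm{x}_k$, $\tilde{\bm{s}}_{k+1}=\bm{r}_k-\langle\bm{s}_k,\bm{r}_k\rangle_{A\Sigma_0A^\top}\bm{s}_k$, assuming $\tilde{\bm{s}}_1,\dots,\tilde{\bm{s}}_m\ne\bm{0}$. For $n\ge0$, let $K_n(M,\bm{v})=\operatorname{span}(\bm{v},M\bm{v},\dots,M^n\bm{v})$ and $K_n^\ast=\{\bm{x}_0+\bm{v}:\bm{v}\in K_n(\Sigma_0A^\top A,\Sigma_0A^\top\bm{r}_0)\}$. Then \[\bm{x}_m=\operatorname*{arg\,min}_{\bm{x}\in K_{m-1}^\ast}\|\bm{x}-\bm{x}^\ast\|_{\Sigma_0^{-1}}.\]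
   Context: $\langle\bm{u},\bm{v}\rangle_{B}=\bm{u}^\top B\bm{v}$ and $\|\bm{v}\|_B=\sqrt{\bm{v}^\top B\bm{v}}$ for symmetric positive-definite $B$. *)

From mathcomp Require Import all_boot all_order all_algebra.
From mathcomp Require Import reals.
Set Implicit Arguments. Unset Strict Implicit. Unset Printing Implicit Defensive.
Import Order.TTheory GRing.Theory Num.Theory.
Local Open Scope ring_scope.

Definition ipB (R : realType) (d : nat) (B : 'M[R]_d) (u v : 'cV[R]_d) : R :=
  (u^T *m B *m v) 0 0.

Definition normB (R : realType) (d : nat) (B : 'M[R]_d) (v : 'cV[R]_d) : R :=
  Num.sqrt (ipB B v v).

Definition spd (R : realType) (d : nat) (B : 'M[R]_d) : Prop :=
  B^T = B /\ forall v : 'cV[R]_d, v != 0 -> 0 < ipB B v v.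

Definition Smx (R : realType) (d : nat) (s : seq 'cV[R]_d) : 'M[R]_(d, size s) :=
  \matrix_(i < d, j < size s) (nth 0 s j) i 0.

Definition bcgM (R : realType) (d : nat) (A Sigma0 : 'M[R]_d) : 'M[R]_d :=
  A *m Sigma0 *m A^T.

Definition bcg_x (R : realType) (d : nat) (A Sigma0 : 'M[R]_d) (b x0 : 'cV[R]_d)
  (s : seq 'cV[R]_d) : 'cV[R]_d :=
  let r0 := b - A *m x0 in
  let S := Smx s in
  x0 + Sigma0 *m A^T *m S *m invmx (S^T *m bcgM A Sigma0 *m S) *m S^T *m r0.

(* given S_{k-1} = [s_1..s_{k-1}], the unnormalised direction stilde_k:
   stilde_1 = r0 ; stilde_{k} = r_{k-1} - <s_{k-1}, r_{k-1}>_M s_{k-1} *)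
Definition bcg_stilde_next (R : realType) (d : nat) (A Sigma0 : 'M[R]_d)
  (b x0 : 'cV[R]_d) (s : seq 'cV[R]_d) : 'cV[R]_d :=
  match s with
  | [::] => b - A *m x0
  | _ :: _ =>
      let sk := last 0 s in
      let rk := b - A *m bcg_x A Sigma0 b x0 s in
      rk - ipB (bcgM A Sigma0) sk rk *: sk
  end.

Fixpoint bcg_dirs (R : realType) (d : nat) (A Sigma0 : 'M[R]_d)
  (b x0 : 'cV[R]_d) (k : nat) : seq 'cV[R]_d :=
  match k with
  | 0 => [::]
  | k'.+1 =>
      let S := bcg_dirs A Sigma0 b x0 k' in
      let st := bcg_stilde_next A Sigma0 b x0 S in
      rcons S ((normB (bcgM A Sigma0) st)^-1 *: st)
  end.

(* stilde_k for k >= 1 *)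
Definition bcg_stilde (R : realType) (d : nat) (A Sigma0 : 'M[R]_d)
  (b x0 : 'cV[R]_d) (k : nat) : 'cV[R]_d :=
  bcg_stilde_next A Sigma0 b x0 (bcg_dirs A Sigma0 b x0 k.-1).

Definition bcg_mean (R : realType) (d : nat) (A Sigma0 : 'M[R]_d)
  (b x0 : 'cV[R]_d) (k : nat) : 'cV[R]_d :=
  bcg_x A Sigma0 b x0 (bcg_dirs A Sigma0 b x0 k).

Definition in_krylov (R : realType) (d : nat) (n : nat) (M : 'M[R]_d)
  (v w : 'cV[R]_d) : Prop :=
  exists c : 'I_n.+1 -> R, w = \sum_(i < n.+1) c i *: iter i (mulmx M) v.

Definition in_Kstar (R : realType) (d : nat) (A Sigma0 : 'M[R]_d)
  (b x0 : 'cV[R]_d) (n : nat) (x : 'cV[R]_d) : Prop :=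
  exists v, in_krylov n (Sigma0 *m A^T *m A) (Sigma0 *m A^T *m (b - A *m x0)) v
            /\ x = x0 + v.

From mathcomp Require Import all_boot all_order all_algebra.
From mathcomp Require Import reals.
From mathcomp Require Import zify.
Set Implicit Arguments. Unset Strict Implicit. Unset Printing Implicit Defensive.
Import Order.TTheory GRing.Theory Num.Theory.
Local Open Scope ring_scope.

(* Write M = A Sigma0 A^T and r_k = b - A x_k.  By induction the directions
   s_1, ..., s_k are M-orthonormal and s_j lies in K_(j-1)(M, r0); being
   independent, they span K_(k-1)(M, r0).  With S = S_k orthonormal, x_k is
   x0 + Sigma0 A^T S S^T r0, so S^T r_k = 0: the residual is orthogonal to the
   whole Krylov space.  This makes s~_(k+1) M-orthogonal to every s_j: for
   j < k because M s_j lies in K_(j)(M, r0), inside the span of S, and for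
   j = k by the choice of the coefficient.
   The map w |-> Sigma0 A^T w carries K_n(M, r0) onto
   K_n(Sigma0 A^T A, Sigma0 A^T r0), so every x in x0 + K_(m-1) is
   x_m + Sigma0 A^T S e.  Since A (x_m - xstar) = -r_m, the Sigma0^-1-inner
   product of x_m - xstar with Sigma0 A^T S e is -r_m^T S e = 0, and
   Pythagoras gives the minimality. *)

Section BilinearForm.
Variables (R : realType) (d : nat) (B : 'M[R]_d).

Lemma ipBDl u1 u2 v : ipB B (u1 + u2) v = ipB B u1 v + ipB B u2 v.
Proof. by rewrite /ipB linearD /= !mulmxDl mxE. Qed.

Lemma ipBDr u v1 v2 : ipB B u (v1 + v2) = ipB B u v1 + ipB B u v2.
Proof. by rewrite /ipB mulmxDr mxE. Qed.

Lemma ipBBr u v1 v2 : ipB B u (v1 - v2) = ipB B u v1 - ipB B u v2.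
Proof. by rewrite /ipB mulmxBr !mxE. Qed.

Lemma ipBZl a u v : ipB B (a *: u) v = a * ipB B u v.
Proof. by rewrite /ipB linearZ /= -!scalemxAl mxE. Qed.

Lemma ipBZr a u v : ipB B u (a *: v) = a * ipB B u v.
Proof. by rewrite /ipB -!scalemxAr mxE. Qed.

Lemma ipB_sym u v : B^T = B -> ipB B u v = ipB B v u.
Proof.
move=> BT; transitivity ((u^T *m B *m v)^T 0 0); first by rewrite mxE.
by rewrite !trmx_mul trmxK BT mulmxA.
Qed.

Lemma ipB_mx_entry n p (X : 'M_(d, n)) (Y : 'M_(d, p)) i j :
  (X^T *m B *m Y) i j = ipB B (col i X) (col j Y).
Proof.
rewrite /ipB tr_col -!row_mul !mxE.
by apply: eq_bigr => k _; rewrite !mxE.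
Qed.

Lemma ipB_ge0 v : spd B -> 0 <= ipB B v v.
Proof.
case=> _ Bpos; have [->|/Bpos/ltW//] := eqVneq v 0.
by rewrite /ipB mulmx0 mxE.
Qed.

Lemma ipB_normalize v :
  0 < ipB B v v -> ipB B ((normB B v)^-1 *: v) ((normB B v)^-1 *: v) = 1.
Proof.
move=> vpos; rewrite ipBZl ipBZr mulrA -invfM -expr2 /normB.
by rewrite sqr_sqrtr ?ltW // mulVf // gt_eqF.
Qed.

Lemma normB_le_addr u z :
  spd B -> ipB B u z = 0 -> normB B u <= normB B (u + z).
Proof.
move=> Bspd uz0; apply: ler_wsqrtr.
have zu0 : ipB B z u = 0 by rewrite ipB_sym //; case: Bspd.
by rewrite !(ipBDl, ipBDr) uz0 zu0 addr0 add0r lerDl ipB_ge0.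
Qed.

End BilinearForm.

Lemma spd_unitmx (R : realType) d (S : 'M[R]_d) : spd S -> S \in unitmx.
Proof.
case=> _ Spos; rewrite -row_free_unit -kermx_eq0; apply: contraT => kerS.
have /sub_kermxP uS0 := nz_row_sub (kermx S).
have := Spos (nz_row (kermx S))^T; rewrite trmx_eq0 nz_row_eq0 => /(_ kerS).
by rewrite /ipB trmxK uS0 mul0mx mxE ltxx.
Qed.

Lemma spd_invmx (R : realType) d (S : 'M[R]_d) : spd S -> spd (invmx S).
Proof.
move=> Sspd; have Su := spd_unitmx Sspd; case: Sspd => ST Spos.
split=> [|v v0]; first by rewrite trmx_inv ST.
have w0 : invmx S *m v != 0.
  by apply: contraNneq v0 => Sv0; rewrite -(mulKVmx Su v) Sv0 mulmx0.
have := Spos _ w0; congr (0 < _).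
by rewrite /ipB trmx_mul trmx_inv ST -!mulmxA (mulKVmx Su).
Qed.

Definition orthonormal (R : realType) d (B : 'M[R]_d) (s : seq 'cV[R]_d) :=
  forall i j, (i < size s)%N -> (j < size s)%N ->
    ipB B (nth 0 s i) (nth 0 s j) = (i == j)%:R.

Section Orthonormal.
Variables (R : realType) (d : nat) (B : 'M[R]_d).

Lemma col_Smx (s : seq 'cV[R]_d) (j : 'I_(size s)) : col j (Smx s) = nth 0 s j.
Proof. by apply/matrixP => i k; rewrite !mxE (ord1 k). Qed.

Lemma orthonormal_Smx s : orthonormal B s -> (Smx s)^T *m B *m Smx s = 1%:M.
Proof. by move=> sON; apply/matrixP => i j; rewrite ipB_mx_entry !col_Smx sON // mxE. Qed.

Lemma orthonormal_rcons s v :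
  B^T = B -> orthonormal B s ->
  (forall j, (j < size s)%N -> ipB B (nth 0 s j) v = 0) -> ipB B v v = 1 ->
  orthonormal B (rcons s v).
Proof.
move=> BT sON sv0 vv1 i j; rewrite size_rcons !ltnS !nth_rcons.
case: ltngtP => [ik|//|->] _ jk.
  case: (ltngtP j (size s)) jk => [jk|//|->] _; first exact: sON.
  by rewrite sv0 // ltn_eqF.
case: (ltngtP j (size s)) jk => [jk|//|_] _; last exact: vv1.
by rewrite ipB_sym // sv0 // gtn_eqF.
Qed.

Lemma orthonormal_row_free s : orthonormal B s -> row_free (Smx s)^T.
Proof. by move=> /orthonormal_Smx sON; apply/row_freeP; exists (B *m Smx s); rewrite mulmxA. Qed.

End Orthonormal.

Section Krylov.
Variables (R : realType) (d : nat) (M : 'M[R]_d) (v : 'cV[R]_d).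

Definition krylov_mx n : 'M[R]_(n, d) :=
  \matrix_(j < n, i < d) (iter j (mulmx M) v) i 0.

(* [in_krylovmx n] is membership in the span of the n vectors v, ..., M^(n-1) v,
   i.e. in K_(n-1)(M, v) in the paper's indexing. *)
Definition in_krylovmx n p (X : 'M[R]_(d, p)) := (X^T <= krylov_mx n)%MS.

Lemma row_krylov_mx n (j : 'I_n) : row j (krylov_mx n) = (iter j (mulmx M) v)^T.
Proof. by apply/matrixP => i k; rewrite !mxE (ord1 i). Qed.

Lemma iter_in_krylovmx n j : (j < n)%N -> in_krylovmx n (iter j (mulmx M) v).
Proof. by move=> jn; apply: (eq_row_sub (Ordinal jn)); rewrite row_krylov_mx. Qed.

Lemma start_in_krylovmx n : in_krylovmx n.+1 v.
Proof. exact: (iter_in_krylovmx (j := 0)). Qed.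

Lemma in_krylovmx_mono n n' p (X : 'M_(d, p)) :
  (n <= n')%N -> in_krylovmx n X -> in_krylovmx n' X.
Proof.
move=> nn' /submx_trans; apply; apply/row_subP => j.
by rewrite row_krylov_mx; apply: iter_in_krylovmx (leq_trans _ nn').
Qed.

Lemma in_krylovmxMr n p q (X : 'M_(d, p)) (Y : 'M_(p, q)) :
  in_krylovmx n X -> in_krylovmx n (X *m Y).
Proof. by rewrite /in_krylovmx trmx_mul => /(submx_trans (submxMl _ _)). Qed.

Lemma in_krylovmxB n p (X Y : 'M_(d, p)) :
  in_krylovmx n X -> in_krylovmx n Y -> in_krylovmx n (X - Y).
Proof.
rewrite /in_krylovmx linearB /= => /submxP[C ->] /submxP[D ->].
by rewrite -mulmxBl submxMl.
Qed.

Lemma in_krylovmxZ n p a (X : 'M_(d, p)) :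
  in_krylovmx n X -> in_krylovmx n (a *: X).
Proof. by rewrite /in_krylovmx linearZ; apply: scalemx_sub. Qed.

Lemma in_krylovmxMl n p (X : 'M_(d, p)) :
  in_krylovmx n X -> in_krylovmx n.+1 (M *m X).
Proof.
rewrite /in_krylovmx trmx_mul => /(submxMr M^T) /submx_trans; apply.
apply/row_subP => j; rewrite row_mul row_krylov_mx -trmx_mul.
by apply: (iter_in_krylovmx (j := j.+1)); rewrite ltnS.
Qed.

Lemma in_krylovmx_cols n p (X : 'M_(d, p)) :
  (forall j, in_krylovmx n (col j X)) -> in_krylovmx n X.
Proof. by move=> Xj; apply/row_subP => j; rewrite -tr_col; apply: Xj. Qed.

Lemma in_krylovmx_colspan n (S : 'M_(d, n)) p (X : 'M_(d, p)) :
  row_free S^T -> in_krylovmx n S -> in_krylovmx n X -> exists C, X = S *m C.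
Proof.
move=> /eqP Sfree SK XK.
have /submxP[D XD] : (X^T <= S^T)%MS.
  apply: submx_trans XK _; rewrite -(geq_leqif (mxrank_leqif_sup SK)) Sfree.
  exact: rank_leq_row.
by exists D^T; rewrite -[X]trmxK XD trmx_mul trmxK.
Qed.

Lemma in_krylovP n w : in_krylov n M v w <-> in_krylovmx n.+1 w.
Proof.
split=> [[c ->]|/submxP[D wD]].
  rewrite /in_krylovmx raddf_sum /=; apply: summx_sub => i _.
  by rewrite linearZ /=; apply/scalemx_sub/iter_in_krylovmx.
exists (fun i => D 0 i); rewrite -[w]trmxK wD mulmx_sum_row raddf_sum.
by apply: eq_bigr => i _; rewrite /= linearZ /= row_krylov_mx trmxK.
Qed.

Definition krylov_graded (s : seq 'cV[R]_d) :=
  forall j, (j < size s)%N -> in_krylovmx j.+1 (nth 0 s j).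

Lemma krylov_graded_Smx s : krylov_graded s -> in_krylovmx (size s) (Smx s).
Proof.
move=> sK; apply: in_krylovmx_cols => j; rewrite col_Smx.
exact: in_krylovmx_mono (sK _ (ltn_ord j)).
Qed.

Lemma krylov_graded_rcons s u :
  krylov_graded s -> in_krylovmx (size s).+1 u -> krylov_graded (rcons s u).
Proof.
move=> sK uK j; rewrite size_rcons ltnS nth_rcons.
by case: ltngtP => [/sK|//|->].
Qed.

End Krylov.

Lemma iter_mulmx_comm (R : ringType) d e (P : 'M[R]_(d, e)) (Q : 'M[R]_(e, d)) (v : 'cV_e) i :
  iter i (mulmx (P *m Q)) (P *m v) = P *m iter i (mulmx (Q *m P)) v.
Proof. by elim: i => //= i ->; rewrite !mulmxA. Qed.

Lemma in_krylov_mulmx (R : realType) d e (P : 'M[R]_(d, e)) (Q : 'M[R]_(e, d)) v n x :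
  in_krylov n (P *m Q) (P *m v) x <->
  exists2 w, in_krylov n (Q *m P) v w & x = P *m w.
Proof.
split=> [[c ->]|[w [c ->] ->]]; last first.
  by exists c; rewrite mulmx_sumr; apply: eq_bigr => i _; rewrite iter_mulmx_comm scalemxAr.
exists (\sum_(i < n.+1) c i *: iter i (mulmx (Q *m P)) v); first by exists c.
by rewrite mulmx_sumr; apply: eq_bigr => i _; rewrite iter_mulmx_comm scalemxAr.
Qed.

Section BayesCG.
Variables (R : realType) (d : nat) (A Sigma0 : 'M[R]_d) (b x0 : 'cV[R]_d).
Local Notation M := (bcgM A Sigma0).
Local Notation r0 := (b - A *m x0).
Local Notation residual s := (b - A *m bcg_x A Sigma0 b x0 s).

Lemma spd_bcgM : A \in unitmx -> spd Sigma0 -> spd M.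
Proof.
move=> Au [ST Spos]; split=> [|w w0]; first by rewrite /bcgM !trmx_mul trmxK ST mulmxA.
have ATu : A^T \in unitmx by rewrite unitmx_tr.
have ATw0 : A^T *m w != 0.
  by apply: contraNneq w0 => ATw; rewrite -(mulKmx ATu w) ATw mulmx0.
by have := Spos _ ATw0; rewrite /ipB /bcgM trmx_mul trmxK !mulmxA.
Qed.

Lemma in_KstarP n x :
  in_Kstar A Sigma0 b x0 n x <->
  exists2 w, in_krylovmx M r0 n.+1 w & x = x0 + Sigma0 *m A^T *m w.
Proof.
have MA : M = A *m (Sigma0 *m A^T) by rewrite /bcgM mulmxA.
split=> [[_ [/in_krylov_mulmx[w wK ->] ->]]|[w wK ->]].
  by exists w => //; apply/in_krylovP; rewrite MA.
exists (Sigma0 *m A^T *m w); split=> //; apply/in_krylov_mulmx.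
by exists w => //; apply/in_krylovP; rewrite -MA.
Qed.

Lemma size_bcg_dirs k : size (bcg_dirs A Sigma0 b x0 k) = k.
Proof. by elim: k => //= k IH; rewrite size_rcons IH. Qed.

Lemma bcg_x_orthonormal s :
  orthonormal M s ->
  bcg_x A Sigma0 b x0 s = x0 + Sigma0 *m A^T *m (Smx s *m ((Smx s)^T *m r0)).
Proof. by move=> /orthonormal_Smx sON; rewrite /bcg_x sON invmx1 mulmx1 !mulmxA. Qed.

Lemma bcg_residual s :
  orthonormal M s -> residual s = r0 - M *m (Smx s *m ((Smx s)^T *m r0)).
Proof. by move=> sON; rewrite bcg_x_orthonormal // mulmxDr opprD addrA /bcgM !mulmxA. Qed.

Lemma bcg_residual_Smx_orth s : orthonormal M s -> (Smx s)^T *m residual s = 0.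
Proof.
move=> sON; rewrite bcg_residual // mulmxBr [_ *m (M *m _)]mulmxA.
by rewrite [_ *m (Smx s *m _)]mulmxA (orthonormal_Smx sON) mul1mx subrr.
Qed.

Lemma bcg_residual_orth s p (X : 'M_(d, p)) :
  orthonormal M s -> krylov_graded M r0 s -> in_krylovmx M r0 (size s) X ->
  X^T *m residual s = 0.
Proof.
move=> sON sK XK.
have [C ->] := in_krylovmx_colspan (orthonormal_row_free sON) (krylov_graded_Smx sK) XK.
by rewrite trmx_mul -mulmxA bcg_residual_Smx_orth // mulmx0.
Qed.

Lemma bcg_residual_krylov s :
  orthonormal M s -> krylov_graded M r0 s -> in_krylovmx M r0 (size s).+1 (residual s).
Proof.
move=> sON sK; rewrite bcg_residual //; apply: in_krylovmxB; first exact: start_in_krylovmx.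
by apply/in_krylovmxMl/in_krylovmxMr/krylov_graded_Smx.
Qed.

Lemma bcg_stilde_next_cons s : s != [::] ->
  bcg_stilde_next A Sigma0 b x0 s =
  residual s - ipB M (last 0 s) (residual s) *: last 0 s.
Proof. by case: s. Qed.

Lemma bcg_stilde_next_krylov s :
  orthonormal M s -> krylov_graded M r0 s ->
  in_krylovmx M r0 (size s).+1 (bcg_stilde_next A Sigma0 b x0 s).
Proof.
move=> sON sK; have [->|s0] := eqVneq s [::]; first exact: start_in_krylovmx.
rewrite bcg_stilde_next_cons //; apply: in_krylovmxB; first exact: bcg_residual_krylov.
have sz : (0 < size s)%N by rewrite lt0n size_eq0.
apply/in_krylovmxZ/(in_krylovmx_mono (leqW (leqnn _))).
by rewrite -nth_last -[X in in_krylovmx _ _ X _](prednK sz); apply/sK; rewrite prednK.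
Qed.

Lemma bcg_stilde_next_orth s j :
  M^T = M -> orthonormal M s -> krylov_graded M r0 s -> (j < size s)%N ->
  ipB M (nth 0 s j) (bcg_stilde_next A Sigma0 b x0 s) = 0.
Proof.
move=> MT sON sK js.
have sz : (0 < size s)%N by apply: leq_ltn_trans js.
rewrite bcg_stilde_next_cons -?size_eq0 -?lt0n // ipBBr ipBZr -nth_last.
have [->|jlast] := eqVneq j (size s).-1.
  by rewrite sON ?prednK // eqxx mulr1 subrr.
rewrite sON ?prednK // (negbTE jlast) mulr0 subr0.
have Msj : in_krylovmx M r0 (size s) (M *m nth 0 s j).
  apply: in_krylovmx_mono (in_krylovmxMl (sK _ js)).
  by move: js jlast; lia.
by rewrite /ipB -{1}MT -trmx_mul bcg_residual_orth // mxE.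
Qed.

(* Unfolding [bcg_dirs] with [simpl] would expand the whole recursion. *)
Lemma bcg_dirsS k :
  let st := bcg_stilde_next A Sigma0 b x0 (bcg_dirs A Sigma0 b x0 k) in
  bcg_dirs A Sigma0 b x0 k.+1 = rcons (bcg_dirs A Sigma0 b x0 k) ((normB M st)^-1 *: st).
Proof. by []. Qed.

Lemma bcg_stildeS k :
  bcg_stilde A Sigma0 b x0 k.+1 = bcg_stilde_next A Sigma0 b x0 (bcg_dirs A Sigma0 b x0 k).
Proof. by []. Qed.

Lemma bcg_dirs_invariant m :
  A \in unitmx -> spd Sigma0 ->
  (forall k, (1 <= k <= m)%N -> bcg_stilde A Sigma0 b x0 k != 0) ->
  forall k, (k <= m)%N ->
  orthonormal M (bcg_dirs A Sigma0 b x0 k) /\ krylov_graded M r0 (bcg_dirs A Sigma0 b x0 k).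
Proof.
move=> Au Sspd st0; have [MT Mpos] := spd_bcgM Au Sspd.
elim=> [|k IH] km; first by split.
have [sON sK] := IH (ltnW km); rewrite bcg_dirsS.
set s := bcg_dirs A Sigma0 b x0 k in sON sK *.
have st0k : bcg_stilde_next A Sigma0 b x0 s != 0 by rewrite -bcg_stildeS st0 ?km.
split.
  apply: orthonormal_rcons => // [j js|]; last exact/ipB_normalize/Mpos.
  by rewrite ipBZr bcg_stilde_next_orth // mulr0.
by apply/krylov_graded_rcons/in_krylovmxZ/bcg_stilde_next_krylov.
Qed.

Lemma bcg_error_orth s e :
  A \in unitmx -> Sigma0 \in unitmx -> orthonormal M s ->
  ipB (invmx Sigma0) (bcg_x A Sigma0 b x0 s - invmx A *m b)
      (Sigma0 *m A^T *m (Smx s *m e)) = 0.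
Proof.
move=> Au Su sON.
have Aerr : A *m (bcg_x A Sigma0 b x0 s - invmx A *m b) = - residual s.
  by rewrite mulmxBr mulKVmx // opprB.
rewrite /ipB -!mulmxA mulKmx // mulmxA -trmx_mul Aerr mulmxA.
rewrite linearN /= !mulNmx -[_^T *m Smx s]trmxK trmx_mul trmxK.
by rewrite bcg_residual_Smx_orth // trmx0 mul0mx oppr0 mxE.
Qed.

End BayesCG.

Theorem proposition8 (R : realType) (d : nat) (A Sigma0 : 'M[R]_d)
  (b x0 : 'cV[R]_d) (m : nat) :
  A \in unitmx ->
  spd Sigma0 ->
  (0 < m)%N ->
  (forall k : nat, (1 <= k <= m)%N -> bcg_stilde A Sigma0 b x0 k != 0) ->
  let xstar := invmx A *m b in
  in_Kstar A Sigma0 b x0 m.-1 (bcg_mean A Sigma0 b x0 m) /\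
  forall x : 'cV[R]_d, in_Kstar A Sigma0 b x0 m.-1 x ->
    normB (invmx Sigma0) (bcg_mean A Sigma0 b x0 m - xstar)
      <= normB (invmx Sigma0) (x - xstar).
Proof.
move=> Au Sspd m0 st0 xstar.
have [sON sK] := bcg_dirs_invariant Au Sspd st0 (leqnn m).
rewrite /bcg_mean; set s := bcg_dirs A Sigma0 b x0 m in sON sK *.
have sz : m.-1.+1 = size s by rewrite size_bcg_dirs prednK.
have SK := krylov_graded_Smx sK.
pose c := (Smx s)^T *m (b - A *m x0).
split.
  apply/in_KstarP; exists (Smx s *m c); last exact: bcg_x_orthonormal.
  by rewrite sz; apply: in_krylovmxMr.
move=> _ /in_KstarP[w + ->]; rewrite sz => wK.
have [C ->] := in_krylovmx_colspan (orthonormal_row_free sON) SK wK.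
have -> : x0 + Sigma0 *m A^T *m (Smx s *m C) - xstar =
    bcg_x A Sigma0 b x0 s - xstar + Sigma0 *m A^T *m (Smx s *m (C - c)).
  rewrite [Smx s *m (_ - _)]mulmxBr mulmxBr bcg_x_orthonormal // -/c.
  by rewrite [RHS]addrAC -[x0 + _ + (_ - _)]addrA subrKC.
apply: normB_le_addr (spd_invmx Sspd) _.
exact: bcg_error_orth (spd_unitmx Sspd) _.
Qed.
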